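(* Consider the coalition formation algorithm for user association (described in the context) applied to a finite set of users $\mathbf{A}\cup\mathbf{D}$ with $n+1$ coalitions $C_0,\dots,C_n$. Starting from an arbitrary initial partition $C_{ini}$, the algorithm always finds a final partition $C_{fin}$ after a finite number of switch operations, and $C_{fin}$ consists of (at most $n+1$) pairwise disjoint coalitions whose union is $\mathbf{A}\cup\mathbf{D}$.
   Context: Setting: a downlink mmWave system with one base station (BS), indexed $n$, and $n$ mobile relays (MRs), indexed $i=0,1,\dots,n-1$. The finite set of users (players) is $\mathbf{A}\cup\mathbf{D}$. A partition (coalition structure) is $C=\{C_0,C_1,\dots,C_n\}$ with $C_i\cap C_{i'}=\emptyset$ for $i\neq i'$ and $\bigcup_{i=0}^n C_i=\mathbf{A}\cup\mathbf{D}$; $C_i$ is the set of users associated with MR $i$ ($i<n$) or with the BS ($i=n$). Each coalition $C_i$ has a real-valued utility $U(C_i)$, namely its average throughput $U(C_i)=\frac{1}{|C_i|}\sum_{l\in C_i}R_l$, where for a user $l\in C_n$ (BS) $R_l=\alpha_n W\log_2(1+P_r(n,l)/(N_0\alpha_n W))$ and for a user $l\in C_i$, $i<n$ (MR), $R_l=\alpha_i W\log_2\bigl(1+P_r(i,l)/(N_0\alpha_i W+\beta P_i)\bigr)$; here $W>0$ is the total bandwidth, $\alpha_i\ge 0$ with $\sum_{i=0}^n\alpha_i=1$ are fixed bandwidth fractions, $P_r(i,l)>0$ is the received power at user $l$ from the BS/MR $i$, $N_0>0$ the noise spectral density, $P_i$ the MR transmit power and $\beta\ge0$ the self-interference cancellation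 factor. Preference order: for a user $l$ currently in coalition $C_{i'}$ and another coalition $C_i$ ($i\ne i'$), $l$ prefers $C_i$ to $C_{i'}$, written $C_i\succ_l C_{i'}$, iff the sum of the utilities of the two coalitions strictly increases when $l$ moves, i.e. $U(C_i\cup\{l\})+U(C_{i'}\setminus\{l\})>U(C_i)+U(C_{i'})$ (the paper writes this as $U(C_i)+U(C_{i'}\setminus l)>U(C_i\setminus l)+U(C_{i'})$). Switch operation: if $C_i\succ_l C_{i'}$ for $l\in C_{i'}$, move $l$ from $C_{i'}$ to $C_i$, replacing $C$ by $(C\setminus\{C_i,C_{i'}\})\cup\{C_{i'}\setminus\{l\},C_i\cup\{l\}\}$. Algorithm: (1) form a random initial partition $C_{ini}$, set $C_{cur}=C_{ini}$, $j=0$; (2) repeat: select a user $l$ in a predetermined order, with current coalition $C_i$; if there is a coalition $C_{i'}$ with $C_{i'}\succ_l C_i$ and ($|C_{i'}|+1\le Y$ if $i'=n$, or $|C_{i'}|+1\le Z$ if $i'\in\{0,\dots,n-1\}$), where $Y,Z$ are the maximal numbers of users the BS and each MR can serve, then set $j=0$ and perform the switch of $l$ from $C_i$ to $C_{i'}$; otherwise set $j=j+1$; (3) stop when the partition reaches a stable state (no switch has occurred for $j=10(|\mathbf{A}|+|\mathbf{D}|)$ consecutive selections); the resulting partition is $C_{fin}$. *)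

From HB Require Import structures.
From mathcomp Require Import all_boot all_order all_algebra.
From mathcomp Require Import reals exp.
Set Implicit Arguments.
Unset Strict Implicit.
Unset Printing Implicit Defensive.
Import Order.TTheory GRing.Theory Num.Theory.
Local Open Scope ring_scope.

(* Users (players) A ∪ D form the finite type [T].
   Coalitions are indexed by ['I_n.+1]: indices 0..n-1 are the MRs,
   index [ord_max] (= n) is the BS. *)

Definition coal_struct (T : finType) (n : nat) := {ffun 'I_n.+1 -> {set T}}.

Definition is_partition (T : finType) (n : nat) (C : coal_struct T n) : Prop :=
  (forall i i' : 'I_n.+1, i != i' -> [disjoint C i & C i']) /\
  \bigcup_(i < n.+1) C i = [set: T].

Definition log2 (R : realType) (x : R) : R := ln x / ln 2.

Definition rate (R : realType) (T : finType) (n : nat)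
    (W : R) (alpha : 'I_n.+1 -> R) (Pr : 'I_n.+1 -> T -> R) (N0 : R)
    (P : 'I_n.+1 -> R) (beta : R) (i : 'I_n.+1) (l : T) : R :=
  if i == ord_max then
    alpha i * W * log2 (1 + Pr i l / (N0 * alpha i * W))
  else
    alpha i * W * log2 (1 + Pr i l / (N0 * alpha i * W + beta * P i)).

(* Utility (average throughput) of coalition S served by i.
   For S empty, the MathComp convention x / 0 = 0 gives U = 0. *)
Definition utility (R : realType) (T : finType) (n : nat)
    (rt : 'I_n.+1 -> T -> R) (i : 'I_n.+1) (S : {set T}) : R :=
  (\sum_(l in S) rt i l) / #|S|%:R.

Definition prefers (R : realType) (T : finType) (n : nat)
    (rt : 'I_n.+1 -> T -> R) (C : coal_struct T n) (l : T) (i i' : 'I_n.+1) : Prop :=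
  utility rt i' (l |: C i') + utility rt i (C i :\ l)
    > utility rt i' (C i') + utility rt i (C i).

Definition capacity_ok (T : finType) (n : nat) (Y Z : nat)
    (C : coal_struct T n) (i' : 'I_n.+1) : Prop :=
  (#|C i'| + 1 <= (if i' == ord_max then Y else Z))%N.

Definition switch (T : finType) (n : nat) (C : coal_struct T n) (l : T)
    (i i' : 'I_n.+1) : coal_struct T n :=
  [ffun k => if k == i then C i :\ l else if k == i' then l |: C i' else C k].

(* Algorithm state: (current partition C_cur, counter j, selection step t). *)
Definition alg_state (T : finType) (n : nat) := (coal_struct T n * nat * nat)%type.

Definition alg_stopped (T : finType) (n : nat) (s : alg_state T n) : Prop :=
  (10 * #|T| <= s.1.2)%N.

(* One iteration of step (2): the user [sel t] is selected (sel is the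
   predetermined selection order); either it performs some admissible switch
   (j reset to 0) or no admissible switch exists (j incremented). *)
Definition alg_step (R : realType) (T : finType) (n : nat)
    (rt : 'I_n.+1 -> T -> R) (Y Z : nat) (sel : nat -> T)
    (s s' : alg_state T n) : Prop :=
  let: (C, j, t) := s in
  let: (C', j', t') := s' in
  ~ alg_stopped s /\ t' = t.+1 /\
  ( (exists i i' : 'I_n.+1,
        sel t \in C i /\ i' != i /\ prefers rt C (sel t) i i' /\
        capacity_ok Y Z C i' /\ C' = switch C (sel t) i i' /\ j' = 0%N)
    \/
    ((forall i i' : 'I_n.+1, sel t \in C i -> i' != i ->
        ~ (prefers rt C (sel t) i i' /\ capacity_ok Y Z C i'))
     /\ C' = C /\ j' = j.+1) ).

Inductive alg_reachable (R : realType) (T : finType) (n : nat)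
    (rt : 'I_n.+1 -> T -> R) (Y Z : nat) (sel : nat -> T)
    (s0 : alg_state T n) : alg_state T n -> Prop :=
  | reach_refl : alg_reachable rt Y Z sel s0 s0
  | reach_step s s' : alg_reachable rt Y Z sel s0 s ->
      alg_step rt Y Z sel s s' -> alg_reachable rt Y Z sel s0 s'.

(** The sum of the utilities of all coalitions is a potential for the
   switch dynamics: a switch changes only the two coalitions involved, so the
   potential increases by exactly the gain in the preference order, which is
   positive.  As the coalition structures form a finite set, the number of
   structures of larger potential strictly decreases at every switch, while
   between two switches the counter [j] strictly approaches its bound; this
   lexicographic measure makes every run finite.  Neither the
   rate formula nor the physical hypotheses play any role. *)
From Stdlib Require Import Wf_nat.
From HB Require Import structures.
From mathcomp Require Import all_boot all_order all_algebra.
From mathcomp Require Import reals exp.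
From mathcomp Require Import zify.
Import Order.TTheory GRing.Theory Num.Theory.
Local Open Scope ring_scope.

Set Implicit Arguments.
Unset Strict Implicit.
Unset Printing Implicit Defensive.

Section Partition.
Variables (T : finType) (n : nat).
Implicit Types (C : coal_struct T n) (l x : T) (i k : 'I_n.+1).

Lemma is_partitionP C : is_partition C <-> forall x, exists! i, x \in C i.
Proof.
split=> [[disjC coverC] x | uniqC].
  have /bigcupP[i _ xi] : x \in \bigcup_(i < n.+1) C i by rewrite coverC inE.
  exists i; split=> // i' xi'; apply/eqP; apply: contraT => neq.
  by rewrite (disjointFr (disjC _ _ neq) xi) in xi'.
split=> [i i' neq | ].
  apply/pred0P => x /=; apply/negbTE/andP => -[xi xi'].
  have [k [_ uniq_k]] := uniqC x.
  by rewrite -(uniq_k _ xi) -(uniq_k _ xi') eqxx in neq.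
apply/setP => x; rewrite inE; have [i [xi _]] := uniqC x.
by apply/bigcupP; exists i.
Qed.

Lemma mem_switch C l i i' k x :
  is_partition C -> l \in C i -> i' != i ->
  (x \in switch C l i i' k) = (if x == l then k == i' else x \in C k).
Proof.
move=> /is_partitionP partC li neq; rewrite /switch ffunE.
have [->|xl] := eqVneq x l.
  case: ifP => [/eqP -> | k_neq_i]; first by rewrite !inE eqxx eq_sym (negbTE neq).
  case: ifP => [_ | _]; first by rewrite !inE eqxx.
  apply/negbTE/negP => lk.
  have [il [_ uniq_l]] := partC l.
  by rewrite -(uniq_l _ li) (uniq_l _ lk) eqxx in k_neq_i.
by case: ifP => [/eqP -> | _]; [|case: ifP => [/eqP -> |]]; rewrite ?inE ?(negbTE xl).
Qed.

Lemma switch_partition C l i i' :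
  is_partition C -> l \in C i -> i' != i -> is_partition (switch C l i i').
Proof.
move=> partC li neq; apply/is_partitionP => x.
have memE k := mem_switch k x partC li neq.
have [xl | xl] := eqVneq x l.
  by exists i'; split=> [|k]; rewrite memE xl eqxx // => /eqP ->.
have [k [xk uniq_k]] := (is_partitionP C).1 partC x.
by exists k; split=> [|k']; rewrite memE (negbTE xl) //; apply: uniq_k.
Qed.

End Partition.

Lemma sum_switch (V : zmodType) (T : finType) (n : nat)
    (f : 'I_n.+1 -> {set T} -> V) (C : coal_struct T n) (l : T) (i i' : 'I_n.+1) :
  i' != i ->
  \sum_k f k (switch C l i i' k) - \sum_k f k (C k) =
  (f i' (l |: C i') + f i (C i :\ l)) - (f i' (C i') + f i (C i)).
Proof.
move=> neq; rewrite -sumrB (bigD1 i) // (bigD1 i') //= big1 => [|k /andP[ki ki']].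
  by rewrite /switch !ffunE eqxx (negbTE neq) eqxx addr0 addrC opprD addrACA.
by rewrite /switch ffunE (negbTE ki) (negbTE ki') subrr.
Qed.

Definition rank_above {S : finType} {d : Order.disp_t} {O : porderType d}
    (f : S -> O) (x : S) : nat :=
  #|[set y | (f x < f y)%O]|.

Lemma rank_above_lt (S : finType) (d : Order.disp_t) (O : porderType d)
    (f : S -> O) (x y : S) :
  (f x < f y)%O -> (rank_above f y < rank_above f x)%N.
Proof.
move=> lt_xy; apply: proper_card; apply/properP; split.
  by apply/subsetP => z; rewrite !inE; apply: lt_trans.
by exists y; rewrite !inE ?ltxx.
Qed.

Section Algorithm.
Variables (R : realType) (T : finType) (n : nat).
Variables (rt : 'I_n.+1 -> T -> R) (Y Z : nat) (sel : nat -> T).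

Definition total_utility (C : coal_struct T n) : R :=
  \sum_k utility rt k (C k).

Lemma total_utility_switch C l i i' :
  i' != i -> prefers rt C l i i' ->
  total_utility C < total_utility (switch C l i i').
Proof. by move=> neq pref; rewrite -subr_gt0 sum_switch // subr_gt0. Qed.

Let bound := (10 * #|T|)%N.

(* Lexicographic in (rank of the partition, remaining idle selections). *)
Definition run_measure (s : alg_state T n) : nat :=
  (rank_above total_utility s.1.1 * bound.+1 + (bound - s.1.2))%N.

Lemma alg_step_measure s s' :
  alg_step rt Y Z sel s s' -> (run_measure s' < run_measure s)%N.
Proof.
case: s s' => [[C j] t] [[C' j'] t']; rewrite /alg_step /alg_stopped /run_measure /=.
move=> [running [_ [[i [i' [_ [neq [pref [_ [-> ->]]]]]]] | [_ [-> ->]]]]].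
  have := rank_above_lt (total_utility_switch neq pref).
  set r' := rank_above _ _; set r := rank_above _ _ => lt_r.
  have : (r'.+1 * bound.+1 <= r * bound.+1)%N by rewrite leq_mul2r lt_r orbT.
  rewrite mulSn; lia.
rewrite -/bound in running; lia.
Qed.

Lemma alg_step_wf : well_founded (fun s' s => alg_step rt Y Z sel s s').
Proof.
apply: (well_founded_lt_compat _ run_measure) => s' s step.
exact/ssrnat.ltP/alg_step_measure.
Qed.

Lemma alg_stopped_or_step s :
  alg_stopped s \/ exists s', alg_step rt Y Z sel s s'.
Proof.
case: s => [[C j] t]; rewrite /alg_stopped /=.
have [stopped | running] := leqP (10 * #|T|) j; [by left | right].
have not_stopped : ~ alg_stopped (C, j, t) by rewrite /alg_stopped /= leqNgt running.
have [/existsP[i /existsP[i' /and4P[li neq pref cap]]] | no_switch] :=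
  boolP [exists i, exists i', [&& sel t \in C i, i' != i,
     utility rt i' (sel t |: C i') + utility rt i (C i :\ sel t)
       > utility rt i' (C i') + utility rt i (C i) &
     (#|C i'| + 1 <= (if i' == ord_max then Y else Z))%N]].
  exists (switch C (sel t) i i', 0%N, t.+1); split=> //; split=> //.
  by left; exists i, i'.
exists (C, j.+1, t.+1); split=> //; split=> //; right; split=> //.
move=> i i' li neq [pref cap]; move/negP: no_switch; apply.
by apply/existsP; exists i; apply/existsP; exists i'; apply/and4P.
Qed.

Lemma alg_reachable_partition s0 s :
  is_partition s0.1.1 -> alg_reachable rt Y Z sel s0 s -> is_partition s.1.1.
Proof.
move=> part0; elim=> // [[[C j] t]] [[C' j'] t'] _ /= partC.
move=> [_ [_ [[i [i' [li [neq [_ [_ [-> _]]]]]]] | [_ [-> _]]]]] //.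
exact: switch_partition.
Qed.

End Algorithm.

Theorem theorem1 (R : realType) (T : finType) (n : nat)
    (W : R) (alpha : 'I_n.+1 -> R) (Pr : 'I_n.+1 -> T -> R) (N0 : R)
    (P : 'I_n.+1 -> R) (beta : R) (Y Z : nat) (sel : nat -> T)
    (C_ini : coal_struct T n) :
  0 < W ->
  (forall i, 0 <= alpha i) -> \sum_(i < n.+1) alpha i = 1 ->
  (forall i l, 0 < Pr i l) -> 0 < N0 -> (forall i, 0 <= P i) -> 0 <= beta ->
  is_partition C_ini ->
  let rt := rate W alpha Pr N0 P beta in
  let s0 : alg_state T n := (C_ini, 0%N, 0%N) in
  (* the algorithm terminates: every run from s0 is finite *)
  Acc (fun s' s => alg_step rt Y Z sel s s') s0 /\
  (* it can only halt by reaching the stopping rule *)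
  (forall s, alg_reachable rt Y Z sel s0 s ->
     alg_stopped s \/ exists s', alg_step rt Y Z sel s s') /\
  (* and the final partition is a partition of A ∪ D into the n+1 coalitions *)
  (forall s, alg_reachable rt Y Z sel s0 s -> alg_stopped s ->
     is_partition s.1.1).
Proof.
move=> _ _ _ _ _ _ _ part_ini rt s0; split; first exact: alg_step_wf.
split=> s reach_s; first exact: alg_stopped_or_step.
by move=> _; exact: alg_reachable_partition reach_s.
Qed.
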